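(* Let $P$ be a finite $(3+1)$-free poset and $T$ a $P$-array. Then $T$ is a $P$-tableau if and only if for each pair of adjacent columns $T_i,T_{i+1}$ of $T$, the ladder decomposition $L_m,\dots,L_1$ of $(T_i,T_{i+1})$ satisfies $\sum_{j=1}^k|L_j\cap T_i|\ge\sum_{j=1}^k|L_j\cap T_{i+1}|$ for all $k\in[m]$.
   Context: $a<_Pb$: strict order; $a\sim_Pb$: incomparable or equal. A $P$-array is a filling $T$ of a Young diagram (English notation) by elements of $P$ such that each column satisfies $T(1,c)<_PT(2,c)<_P\cdots$; it is a $P$-tableau if additionally $T(r,c+1)\not<_PT(r,c)$ whenever both boxes exist. Each column is viewed as a chain of $P$. For chains $C,D$, $\mathrm{inc}_P(C,D)$ is the bipartite graph on $C\sqcup D$ with an edge $c$—$d$ ($c\in C,d\in D$) when $c\sim_Pd$; its connected components are the ladders of $(C,D)$. For $(3+1)$-free $P$ the ladders are totally ordered in the sense that for two distinct ladders every element of one is $<_P$ every element of the other; the ladder decomposition $L_m,\dots,L_1$ lists the ladders in decreasing order (so $L_1$ is the smallest). *)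

From HB Require Import structures.
From mathcomp Require Import all_boot all_order.
Set Implicit Arguments. Unset Strict Implicit. Unset Printing Implicit Defensive.
Import Order.TTheory.
Local Open Scope order_scope.

Section Defs.
Context {disp : Order.disp_t} {P : finPOrderType disp}.

Definition simP (a b : P) : bool := ~~ (a < b) && ~~ (b < a).

Definition three_one_free : Prop :=
  ~ exists a b c d : P, [/\ a < b, b < c & [&& simP d a, simP d b & simP d c]].

(* A filling T of a Young diagram (English notation) is given by its list of
   columns, each listed from top to bottom: T(r,c) = nth (nth [::] T c) r. *)
Definition entry (T : seq (seq P)) (r c : nat) (x0 : P) : P :=
  nth x0 (nth [::] T c) r.

Definition young_shape (T : seq (seq P)) : bool :=
  all (fun col => 0 < size col)%N T && sorted geq (map size T).

Definition P_array (T : seq (seq P)) : bool :=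
  young_shape T && all (fun col => sorted (fun x y : P => x < y) col) T.

Definition P_tableau (T : seq (seq P)) : Prop :=
  P_array T /\
  forall (c r : nat) (x0 : P), (c.+1 < size T)%N ->
    (r < size (nth [::] T c))%N -> (r < size (nth [::] T c.+1))%N ->
    ~~ (entry T r c.+1 x0 < entry T r c x0).

Section Ladders.
Variables C D : seq P.

Definition lvert := ('I_(size C) + 'I_(size D))%type.

Definition lval (v : lvert) : P :=
  match v with
  | inl i => tnth (in_tuple C) i
  | inr j => tnth (in_tuple D) j
  end.

Definition ledge : rel lvert := fun u v =>
  match u, v with
  | inl _, inr _ | inr _, inl _ => simP (lval u) (lval v)
  | _, _ => false
  end.

Definition same_ladder (u v : lvert) : bool := connect ledge u v.

Definition ladder_le (u v : lvert) : bool :=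
  same_ladder u v ||
  [forall x : lvert, forall y : lvert,
     same_ladder u x ==> same_ladder v y ==> (lval x < lval y)].

(* Ladder condition: writing the ladders L_m > ... > L_1, for each k the
   number of C-vertices in L_1 ∪ ... ∪ L_k is at least the number of
   D-vertices there; {L_1,...,L_k} is the set of ladders <= L_k. *)
Definition ladder_condition : Prop :=
  forall v : lvert,
    (#|[pred j : 'I_(size D) | ladder_le (inr j) v]|
       <= #|[pred i : 'I_(size C) | ladder_le (inl i) v]|)%N.
End Ladders.

End Defs.

From HB Require Import structures.
From mathcomp Require Import all_boot all_order.
Set Implicit Arguments. Unset Strict Implicit. Unset Printing Implicit Defensive.
Import Order.TTheory.
Local Open Scope order_scope.

(* Two elements of C ⊔ D in different ladders are
   comparable, and a comparison between two ladders propagates along the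
   edges of both, so the ladders are totally ordered; this needs no hypothesis
   on P.  If no row r has D_r <_P C_r, the ladder of D_r is at least that of
   C_r, and r |-> r injects the D-elements of the lowest k ladders into their
   C-elements.  Conversely, at the first row m with D_m <_P C_m,
   (3+1)-freeness forbids any edge leaving {C_a : a < m} ∪ {D_b : b <= m}; so
   the ladders up to that of D_m contain D_0, ..., D_m but at most m elements
   of C, and the ladder condition fails. *)

Lemma card_ord_bound n m (A : {pred 'I_n}) :
  (forall i : 'I_n, i \in A -> (i < m)%N) -> (#|A| <= m)%N.
Proof.
move=> A_lt; rewrite cardE -(size_map val) -[m](size_iota 0).
apply: uniq_leq_size; first by rewrite (map_inj_uniq val_inj) enum_uniq.
by move=> x /mapP[i]; rewrite mem_enum => /A_lt im ->; rewrite mem_iota.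
Qed.

Lemma card_ord_prefix n m (A : {pred 'I_n}) : (m <= n)%N ->
  (forall i : 'I_n, (i < m)%N -> i \in A) -> (m <= #|A|)%N.
Proof.
move=> mn A_ge; rewrite cardE -(size_map val) -[m in (m <= _)%N](size_iota 0).
apply: uniq_leq_size; first exact: iota_uniq.
move=> x; rewrite mem_iota add0n => xm.
by apply/mapP; exists (Ordinal (leq_trans xm mn)); rewrite ?mem_enum ?A_ge.
Qed.

Section TwoColumns.
Variables (disp : Order.disp_t) (P : finPOrderType disp).

Definition columns_compatible (C D : seq P) : Prop :=
  forall (x0 : P) r, (r < size D)%N -> ~~ (nth x0 D r < nth x0 C r).

Variables C D : seq P.
Hypotheses (sortC : sorted (fun x y : P => x < y) C)
           (sortD : sorted (fun x y : P => x < y) D).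

Local Notation vertex := (lvert C D).
Local Notation same := (@same_ladder _ P C D).
Local Notation lv := (@lval _ P C D).
Local Notation ledge := (@ledge _ P C D).
Local Notation ladder_le := (@ladder_le _ P C D).

Lemma lval_inl x0 (i : 'I_(size C)) : lv (inl i) = nth x0 C i.
Proof. exact: tnth_nth. Qed.

Lemma lval_inr x0 (j : 'I_(size D)) : lv (inr j) = nth x0 D j.
Proof. exact: tnth_nth. Qed.

Lemma ledge_sym : symmetric ledge.
Proof. by case=> a [b|b] //=; rewrite /simP andbC. Qed.

Lemma same_ladder_sym : connect_sym ledge.
Proof. exact: sym_connect_sym ledge_sym. Qed.

Lemma ledge_simP u v : ledge u v -> simP (lv u) (lv v).
Proof. by case: u => a; case: v => b. Qed.

Lemma lval_cmp_of_not_same u w : ~~ same u w -> (lv u < lv w) || (lv w < lv u).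
Proof.
have not_ledge u' w' : ~~ same u' w' -> ~~ ledge u' w'.
  by apply: contra; apply: connect1.
case: u w => [i|i] [k|k] nuw.
- have x0 := lv (inl i); rewrite !(lval_inl x0).
  rewrite !(lt_sorted_ltn_nth x0 sortC) ?inE ?ltn_ord // -neq_ltn.
  by apply: contraNneq nuw => /val_inj ->; apply: connect0.
- by move: (not_ledge _ _ nuw); rewrite /= /simP negb_and !negbK.
- by move: (not_ledge _ _ nuw); rewrite /= /simP negb_and !negbK.
- have x0 := lv (inr i); rewrite !(lval_inr x0).
  rewrite !(lt_sorted_ltn_nth x0 sortD) ?inE ?ltn_ord // -neq_ltn.
  by apply: contraNneq nuw => /val_inj ->; apply: connect0.
Qed.

Lemma ladder_below_closed w :
  closed ledge [pred y | ~~ same y w && (lv y < lv w)].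
Proof.
apply: intro_closed; first exact: same_ladder_sym.
move=> x y exy /andP[nxw xw].
have nyw : ~~ same y w by apply: contra nxw; apply/connect_trans/connect1.
rewrite inE nyw; have /orP[//|wy] := lval_cmp_of_not_same nyw.
by have /andP[/negP[]] := ledge_simP exy; apply: lt_trans wy.
Qed.

Lemma ladder_above_closed u :
  closed ledge [pred y | ~~ same u y && (lv u < lv y)].
Proof.
apply: intro_closed; first exact: same_ladder_sym.
move=> x y exy /andP[nux ux].
have nuy : ~~ same u y.
  apply: contra nux => uy.
  by apply: connect_trans uy _; rewrite same_ladder_sym connect1.
rewrite inE nuy; have /orP[//|yu] := lval_cmp_of_not_same nuy.
by have /andP[_ /negP[]] := ledge_simP exy; apply: lt_trans ux.
Qed.

Lemma ladder_lt u w x y : ~~ same u w -> lv u < lv w ->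
  same u x -> same w y -> lv x < lv y.
Proof.
move=> nuw uw ux wy.
have /andP[nxw xw] : x \in [pred z | ~~ same z w && (lv z < lv w)].
  by rewrite -(closed_connect (ladder_below_closed w) ux) inE nuw.
have : y \in [pred z | ~~ same x z && (lv x < lv z)].
  by rewrite -(closed_connect (ladder_above_closed x) wy) inE nxw.
by case/andP.
Qed.

Lemma ladder_leP u v :
  reflect (same u v \/ forall x y, same u x -> same v y -> lv x < lv y)
          (ladder_le u v).
Proof.
apply: (iffP orP) => -[uv|uv]; [by left|right|by left|right].
- by move=> x y ux vy; move/forallP/(_ x)/forallP/(_ y): uv; rewrite ux vy.
- apply/forallP=> x; apply/forallP=> y.
  by apply/implyP=> ux; apply/implyP; apply: uv.
Qed.

Lemma ladder_le_of_not_lt u v : ~~ (lv v < lv u) -> ladder_le u v.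
Proof.
move=> nvu; apply/ladder_leP; case: (boolP (same u v)) => [|nuv]; first by left.
have uv : lv u < lv v.
  by have := lval_cmp_of_not_same nuv; rewrite (negbTE nvu) orbF.
by right=> x y; apply: ladder_lt nuv uv.
Qed.

Lemma same_ladder_le u v : ladder_le u v -> lv v < lv u -> same u v.
Proof.
case/ladder_leP=> [//|uv] vu.
by have := uv u v (connect0 _ _) (connect0 _ _); rewrite lt_gtF.
Qed.

Lemma ladder_le_trans w u v :
  ladder_le u w -> ladder_le w v -> ladder_le u v.
Proof.
move=> /ladder_leP[uw|uw] /ladder_leP[wv|wv]; apply/ladder_leP.
- by left; apply: connect_trans uw wv.
- right=> x y ux vy; apply: wv vy.
  by apply: connect_trans _ ux; rewrite same_ladder_sym.
- by right=> x y ux vy; apply: uw ux _; apply: connect_trans wv vy.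
- right=> x y ux vy.
  exact: lt_trans (uw x w ux (connect0 _ _)) (wv w y (connect0 _ _) vy).
Qed.

Lemma ladder_condition_of_compatible :
  (size D <= size C)%N -> columns_compatible C D -> ladder_condition C D.
Proof.
move=> szDC compat v; pose f := widen_ord szDC.
have f_inj : injective f by move=> i j /(congr1 val) /= /val_inj.
rewrite -(card_imset _ f_inj).
apply/subset_leq_card/subsetP => _ /imsetP[j + ->].
rewrite !inE; apply: ladder_le_trans; apply: ladder_le_of_not_lt.
have x0 := lv (inr j); rewrite (lval_inl x0) (lval_inr x0); exact: compat.
Qed.

Section FirstViolation.
Hypothesis free : three_one_free (P := P).
Variables (x0 : P) (m : nat).
Hypotheses (mD : (m < size D)%N) (violation : nth x0 D m < nth x0 C m)
           (compat_below : forall a, (a < m)%N -> ~~ (nth x0 D a < nth x0 C a)).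

(* Otherwise C_a would be incomparable to the whole chain D_a < D_m < D_b. *)
Lemma not_simP_below_above a b : (a < m)%N -> (m < b)%N -> (b < size D)%N ->
  ~~ simP (nth x0 C a) (nth x0 D b).
Proof.
move=> am mb bD; apply/negP => /andP[ca_db db_ca].
have da_dm : nth x0 D a < nth x0 D m.
  by rewrite (lt_sorted_ltn_nth x0 sortD) ?inE ?(ltn_trans am mD).
have dm_db : nth x0 D m < nth x0 D b.
  by rewrite (lt_sorted_ltn_nth x0 sortD) ?inE.
have ca_dm : simP (nth x0 C a) (nth x0 D m).
  apply/andP; split; apply/negP => lt.
    by move/negP: ca_db; apply; apply: lt_trans dm_db.
  by move/negP: (compat_below am); apply; apply: lt_trans lt.
have ca_da : simP (nth x0 C a) (nth x0 D a).
  rewrite /simP compat_below // andbT; apply/negP => lt.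
  by move/andP: ca_dm => [/negP[]]; apply: lt_trans da_dm.
apply: free; exists (nth x0 D a), (nth x0 D m), (nth x0 D b), (nth x0 C a).
by split => //; rewrite ca_da ca_dm /simP ca_db db_ca.
Qed.

Lemma not_simP_lower_upper a b : (b <= m)%N -> (m <= a)%N -> (a < size C)%N ->
  ~~ simP (nth x0 D b) (nth x0 C a).
Proof.
move=> bm ma aC; rewrite /simP negb_and !negbK; apply/orP; left.
apply: le_lt_trans (lt_le_trans violation _).
  by rewrite (lt_sorted_leq_nth x0 sortD) ?inE ?(leq_ltn_trans bm mD).
by rewrite (lt_sorted_leq_nth x0 sortC) ?inE ?(leq_ltn_trans ma aC).
Qed.

Definition lower_rows : pred vertex :=
  fun z => match z with inl a => (a < m)%N | inr b => (b <= m)%N end.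

Lemma lower_rows_closed : closed ledge lower_rows.
Proof.
apply: intro_closed; first exact: same_ladder_sym.
case=> [a|b] [a'|b'] //= e; rewrite !unfold_in /=.
- move=> am; rewrite leqNgt; apply/negP => mb; move: e.
  by rewrite !(tnth_nth x0); apply/negP/not_simP_below_above.
- move=> bm; rewrite ltnNge; apply/negP => ma; move: e.
  by rewrite !(tnth_nth x0); apply/negP/not_simP_lower_upper.
Qed.

Lemma ladder_condition_violated : ~ ladder_condition C D.
Proof.
pose dm : vertex := inr (Ordinal mD).
have C_side : (#|[pred i : 'I_(size C) | ladder_le (inl i) dm]| <= m)%N.
  apply: card_ord_bound => i; rewrite inE => idm; case: (ltnP i m) => // mi.
  have : same (inl i) dm.
    apply: (same_ladder_le idm); rewrite (lval_inl x0) (lval_inr x0).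
    apply: (lt_le_trans violation).
    by rewrite (lt_sorted_leq_nth x0 sortC) ?inE ?(leq_ltn_trans mi).
  move=> /(closed_connect lower_rows_closed).
  by rewrite !unfold_in /= leqnn ltnNge mi.
have D_side : (m < #|[pred j : 'I_(size D) | ladder_le (inr j) dm]|)%N.
  apply: card_ord_prefix => // j jm; rewrite inE; apply: ladder_le_of_not_lt.
  by rewrite !(lval_inr x0) (lt_sorted_ltn_nth x0 sortD) ?inE // -leqNgt.
by move=> /(_ dm); rewrite leqNgt (leq_ltn_trans C_side D_side).
Qed.

End FirstViolation.

Lemma compatible_of_ladder_condition : three_one_free (P := P) ->
  ladder_condition C D -> columns_compatible C D.
Proof.
move=> free lc x0 r rD; apply/negP => viol.
have ex_viol : exists r, (r < size D)%N && (nth x0 D r < nth x0 C r).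
  by exists r; rewrite rD viol.
have [m /andP[mD vm] m_min] := ex_minnP ex_viol.
apply: (ladder_condition_violated free mD vm _ lc) => a am.
apply/negP => va; move: (m_min a); rewrite (ltn_trans am mD) va leqNgt am.
by move/(_ isT).
Qed.

Lemma ladder_conditionP : three_one_free (P := P) -> (size D <= size C)%N ->
  columns_compatible C D <-> ladder_condition C D.
Proof.
move=> free szDC; split.
  exact: ladder_condition_of_compatible.
exact: compatible_of_ladder_condition.
Qed.

End TwoColumns.

Section Arrays.
Variables (disp : Order.disp_t) (P : finPOrderType disp) (T : seq (seq P)).
Hypothesis arrT : P_array T.

Lemma P_array_sorted_col i : (i < size T)%N ->
  sorted (fun x y : P => x < y) (nth [::] T i).
Proof. by move=> iT; case/andP: arrT => _ /allP; apply; rewrite mem_nth. Qed.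

Lemma P_array_size_col i : (i.+1 < size T)%N ->
  (size (nth [::] T i.+1) <= size (nth [::] T i))%N.
Proof.
case/andP: arrT => /andP[_ /(sortedP 0%N) shape] _ iT.
have := shape i; rewrite size_map => /(_ iT).
by rewrite !(nth_map [::]) // ltnW.
Qed.

Lemma P_tableau_compatible : P_tableau T <->
  forall i, (i.+1 < size T)%N ->
    columns_compatible (nth [::] T i) (nth [::] T i.+1).
Proof.
split=> [[_ tab] i iT x0 r rD | compat].
  exact: tab i r x0 iT (leq_trans rD (P_array_size_col iT)) rD.
by split=> // c r x0 cT _; apply: compat.
Qed.

End Arrays.

Theorem mainTheorem18 (disp : Order.disp_t) (P : finPOrderType disp)
  (T : seq (seq P)) :
  three_one_free (P := P) -> P_array T ->
  (P_tableau T <->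
   forall i : nat, (i.+1 < size T)%N ->
     ladder_condition (nth [::] T i) (nth [::] T i.+1)).
Proof.
move=> free arrT.
have two_columns i (iT : (i.+1 < size T)%N) :=
  ladder_conditionP (P_array_sorted_col arrT (ltnW iT))
    (P_array_sorted_col arrT iT) free (P_array_size_col arrT iT).
split=> [/(P_tableau_compatible arrT) compat i iT | lc].
  exact/two_columns/compat.
by apply/(P_tableau_compatible arrT) => i iT; apply/two_columns/lc.
Qed.
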